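(* Let $X$ be an unbounded connected coarse space. The following are equivalent: (1) $X$ is thin; (2) the coarse hyperspace $\mathcal{M}'\text{-}\exp X$ is connected, where $\mathcal{M}'(X)$ is the family of all non-empty meshy subsets of $X$; (3) the map $c_X\colon X\to\exp X$, $c_X(x)=X\setminus\{x\}$, is an asymorphic embedding.
   Context: Coarse structure $\mathcal{C}_X$: family of subsets of $X\times X$ containing the diagonal, closed under subsets, finite unions, inverses, compositions; connected if every singleton $\{(x,y)\}$ is controlled; bounded sets: $B$ with $B\times B\in\mathcal{C}_X$. $A\subseteq X$ is meshy if $\{x\in X:E[x]\subseteq A\}=\varnothing$ for some $E\in\mathcal{C}_X$. $X$ is thin if for every $E\in\mathcal{C}_X$ there is a bounded $B$ with $E[x]\cap E[y]=\varnothing$ for all distinct $x,y\in X\setminus B$. $\exp E=\{(A,B)\in\mathcal{P}(X)^2:A\subseteq E[B],\ B\subseteq E[A]\}$; $\exp X$ is $\mathcal{P}(X)$ with the coarse structure generated by $\{\exp E:E\in\mathcal{C}_X\}$; for $\mathcal{A}(X)\subseteq\mathcal{P}(X)$, $\mathcal{A}\text{-}\exp X$ is the subspace $\mathcal{A}(X)$ with restricted coarse structure. An asymorphic embedding is an injective map that is a bornologous bijection onto its image with bornologous inverse (bornologous: images of controlled sets under $f\times f$ are controlled). *)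

Set Implicit Arguments.

Definition rel (X : Type) := X -> X -> Prop.

Record is_coarse (X : Type) (C : rel X -> Prop) : Prop := {
  co_diag : C (fun x y => x = y);
  co_sub : forall E F : rel X, C E -> (forall x y, F x y -> E x y) -> C F;
  co_union : forall E F : rel X, C E -> C F -> C (fun x y => E x y \/ F x y);
  co_inv : forall E : rel X, C E -> C (fun x y => E y x);
  co_comp : forall E F : rel X, C E -> C F ->
      C (fun x z => exists y, E x y /\ F y z)
}.

Definition coarse_connected (X : Type) (C : rel X -> Prop) : Prop :=
  forall x y : X, C (fun a b => a = x /\ b = y).

Definition bounded (X : Type) (C : rel X -> Prop) (B : X -> Prop) : Prop :=
  C (fun x y => B x /\ B y).

Definition unbounded (X : Type) (C : rel X -> Prop) : Prop :=
  ~ bounded C (fun _ => True).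

(* E[x] = {y | (x,y) in E},  E[A] = union of E[a], a in A *)
Definition ball (X : Type) (E : rel X) (x : X) : X -> Prop := fun y => E x y.
Definition ballS (X : Type) (E : rel X) (A : X -> Prop) : X -> Prop :=
  fun y => exists a, A a /\ E a y.

Definition meshy (X : Type) (C : rel X -> Prop) (A : X -> Prop) : Prop :=
  exists E, C E /\ forall x : X, ~ (forall y, ball E x y -> A y).

Definition thin (X : Type) (C : rel X -> Prop) : Prop :=
  forall E, C E -> exists B, bounded C B /\
    forall x y : X, ~ B x -> ~ B y -> x <> y ->
      forall z, ~ (ball E x z /\ ball E y z).

Definition expRel (X : Type) (E : rel X) : rel (X -> Prop) :=
  fun A B => (forall a, A a -> ballS E B a) /\ (forall b, B b -> ballS E A b).

Definition generated (Y : Type) (S : rel Y -> Prop) : rel Y -> Prop :=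
  fun R => forall C' : rel Y -> Prop, is_coarse C' ->
     (forall E, S E -> C' E) -> C' R.

Definition expC (X : Type) (C : rel X -> Prop) : rel (X -> Prop) -> Prop :=
  generated (fun R => exists E, C E /\ R = expRel E).

Definition restrictC (Y : Type) (C : rel Y -> Prop) (P : Y -> Prop)
  : rel {y : Y | P y} -> Prop :=
  fun R => C (fun a b => exists (pa : P a) (pb : P b),
                           R (exist _ a pa) (exist _ b pb)).

Definition nonempty_meshy (X : Type) (C : rel X -> Prop) (A : X -> Prop) : Prop :=
  (exists x, A x) /\ meshy C A.

Definition bornologous (X Y : Type) (CX : rel X -> Prop) (CY : rel Y -> Prop)
  (f : X -> Y) : Prop :=
  forall E, CX E -> CY (fun u v => exists x y, E x y /\ u = f x /\ v = f y).

(* asymorphic embedding: injective, bornologous, and its inverse on the image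
   f(X) (with the subspace structure) is bornologous; since f is injective the
   image of R under the inverse is the preimage of R under f. *)
Definition asymorphic_embedding (X Y : Type) (CX : rel X -> Prop)
  (CY : rel Y -> Prop) (f : X -> Y) : Prop :=
  (forall x y, f x = f y -> x = y) /\
  bornologous CX CY f /\
  (forall R : rel Y, CY R ->
     (forall u v, R u v -> (exists x, u = f x) /\ (exists y, v = f y)) ->
     CX (fun x y => R (f x) (f y))).

Definition cX (X : Type) (x : X) : X -> Prop := fun y => y <> x.

(* Write N_E for the set of points x with x ∈ E[X∖{x}].  X is thin iff N_E is
   bounded for every controlled E.  Thinness makes every meshy set bounded, so
   any two non-empty meshy sets are close in exp X.  Conversely, if they are all
   close then each is close to a singleton, hence bounded; and a maximal subset
   of N_E whose points are pairwise not E-related is meshy, so bounded, while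
   its E-neighbourhood covers N_E.  For c_X, the pair (X∖{x}, X∖{y}) with x ≠ y
   lies in exp E only if x, y ∈ N_E, and lies in exp (E ∪ Δ) if they are; so
   the controlled sets of exp X on the image of c_X pull back to subsets of
   Δ ∪ N_E × N_E. *)

From Stdlib Require Import Classical.
From mathcomp Require classical_sets.
Set Implicit Arguments.

Lemma maximal_independent (T : Type) (F : rel T) (N : T -> Prop) :
  exists M : T -> Prop,
    (forall x, M x -> N x) /\
    (forall x y, M x -> M y -> F x y -> x = y) /\
    (forall x, N x -> ~ M x -> exists u, M u /\ (F u x \/ F x u)).
Proof.
  set (indep := fun M : T -> Prop =>
    (forall x, M x -> N x) /\ forall x y, M x -> M y -> F x y -> x = y).
  destruct (@classical_sets.Zorn_bigcup T indep) as [M [[MN Mind] Mmax]].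
  - intros Fam Find Htot. split.
    + intros x [A FA Ax]. exact (proj1 (Find A FA) x Ax).
    + intros x y [A FA Ax] [B FB By] Fxy.
      destruct (Htot A B FA FB) as [AB|BA].
      * exact (proj2 (Find B FB) x y (AB x Ax) By Fxy).
      * exact (proj2 (Find A FA) x y Ax (BA y By) Fxy).
  - exists M. split; [exact MN|]. split; [exact Mind|].
    intros x Nx nMx. apply NNPP; intro Hsep.
    apply (Mmax (fun y => M y \/ y = x)).
    + split; [intros y My; left; exact My|].
      intro Hsub. apply nMx, Hsub. right; reflexivity.
    + split.
      * intros y [My| ->]; auto.
      * intros u v Hu Hv Fuv. apply NNPP; intro uv.
        destruct Hu as [Mu| ->]; destruct Hv as [Mv| ->].
        -- apply uv, Mind; auto.
        -- apply Hsep; eauto.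
        -- apply Hsep; eauto.
        -- apply uv; reflexivity.
Qed.

Definition symcl (X : Type) (E : rel X) : rel X :=
  fun x y => x = y \/ E x y \/ E y x.

Lemma symcl_sym (X : Type) (E : rel X) (x y : X) : symcl E x y -> symcl E y x.
Proof. intros [e|[e|e]]; [left; auto | right; right | right; left]; exact e. Qed.

Definition nonisolated (X : Type) (E : rel X) (x : X) : Prop := ballS E (cX x) x.

Lemma expRel_sym (X : Type) (E : rel X) (A B : X -> Prop) : expRel E A B -> expRel E B A.
Proof. intros [p q]; split; assumption. Qed.

Lemma expRel_mono {X : Type} {E F : rel X} {A B : X -> Prop} :
  (forall x y, E x y -> F x y) -> expRel E A B -> expRel F A B.
Proof.
  intros EF [p q]; split.
  - intros a Aa. destruct (p a Aa) as [b [Bb Eba]]. exists b; auto.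
  - intros b Bb. destruct (q b Bb) as [a [Aa Eab]]. exists a; auto.
Qed.

Lemma expRel_refl (X : Type) (E : rel X) (A : X -> Prop) : (forall x, E x x) -> expRel E A A.
Proof. intros Erefl; split; intros a Aa; exists a; auto. Qed.

Lemma expRel_comp (X : Type) (E F : rel X) (A B D : X -> Prop) :
  expRel E A B -> expRel F B D ->
  expRel (fun x z => (exists y, F x y /\ E y z) \/ (exists y, E x y /\ F y z)) A D.
Proof.
  intros [p1 q1] [p2 q2]; split.
  - intros a Aa. destruct (p1 a Aa) as [b [Bb Eba]].
    destruct (p2 b Bb) as [d [Dd Fdb]]. exists d. split; [exact Dd|]. left; eauto.
  - intros d Dd. destruct (q2 d Dd) as [b [Bb Fbd]].
    destruct (q1 b Bb) as [a [Aa Eab]]. exists a. split; [exact Aa|]. right; eauto.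
Qed.

Section CoarseSpace.

Variables (X : Type) (C : rel X -> Prop).
Hypothesis HC : is_coarse C.

Lemma unbounded_two_points : unbounded C -> exists x0 x1 : X, x0 <> x1.
Proof.
  intros Hunb. apply NNPP; intro Hn. apply Hunb.
  apply (co_sub HC _ _ (co_diag HC)). intros x y _.
  apply NNPP; intro xy. apply Hn; eauto.
Qed.

Lemma symcl_controlled (E : rel X) : C E -> C (symcl E).
Proof.
  intros HE. apply (co_union HC); [apply (co_diag HC)|].
  apply (co_union HC); [exact HE | exact (co_inv HC _ HE)].
Qed.

Lemma bounded_sub {B B' : X -> Prop} :
  bounded C B -> (forall x, B' x -> B x) -> bounded C B'.
Proof. intros HB sub. apply (co_sub HC _ _ HB). intros x y [? ?]; auto. Qed.

Lemma bounded_ballS (B : X -> Prop) (E : rel X) : bounded C B -> C E -> bounded C (ballS E B).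
Proof.
  intros HB HE.
  apply (co_sub HC (fun x y => exists b1, E b1 x /\ exists b2, (B b1 /\ B b2) /\ E b2 y)).
  - apply (co_comp HC); [exact (co_inv HC _ HE)|]. exact (co_comp HC _ _ HB HE).
  - intros x y [[b1 [B1 E1]] [b2 [B2 E2]]]. exists b1; split; [exact E1|]. eauto.
Qed.

Lemma thin_nonisolated : thin C <-> forall E, C E -> bounded C (nonisolated E).
Proof.
  split.
  - intros Ht E HE.
    destruct (Ht _ (symcl_controlled HE)) as [B [HB sep]].
    apply (bounded_sub (bounded_ballS HB (symcl_controlled HE))).
    intros x [a [ax Eax]].
    destruct (classic (B x)) as [Bx|nBx]; [exists x; split; [exact Bx | left; reflexivity]|].
    destruct (classic (B a)) as [Ba|nBa]; [exists a; split; [exact Ba | right; left; exact Eax]|].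
    exfalso. apply (sep x a nBx nBa (fun e => ax (eq_sym e)) x).
    split; [left; reflexivity | right; left; exact Eax].
  - intros Hb E HE.
    set (overlap := fun x y => exists z, E x z /\ E y z).
    assert (Hov : C overlap).
    { apply (co_sub HC _ _ (co_comp HC _ _ HE (co_inv HC _ HE))).
      intros x y [z [? ?]]; eauto. }
    exists (nonisolated overlap). split; [exact (Hb _ Hov)|].
    intros x y nx _ xy z [Exz Eyz]. apply nx.
    exists y. split; [exact (fun e => xy (eq_sym e)) | exists z; auto].
Qed.

Lemma meshy_sub_nonisolated (A : X -> Prop) :
  meshy C A -> exists E, C E /\ forall a, A a -> nonisolated E a.
Proof.
  intros [G [HG HM]]. exists (fun x y => G y x). split; [exact (co_inv HC _ HG)|].
  intros a Aa. destruct (not_all_ex_not _ _ (HM a)) as [y Hy].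
  apply imply_to_and in Hy. destruct Hy as [Gay nAy].
  exists y. split; [intro; subst; auto | exact Gay].
Qed.

Lemma thin_meshy_bounded (A : X -> Prop) : thin C -> meshy C A -> bounded C A.
Proof.
  intros Ht MA. destruct (meshy_sub_nonisolated MA) as [E [HE sub]].
  exact (bounded_sub (proj1 thin_nonisolated Ht E HE) sub).
Qed.

(* M: a maximal subset of nonisolated (symcl E) without two distinct symcl E-related
   points.  It is meshy, and symcl E[M] covers nonisolated E. *)
Lemma meshy_bounded_thin : (forall A, meshy C A -> bounded C A) -> thin C.
Proof.
  intros Hmb. apply thin_nonisolated. intros E HE.
  set (F := symcl E).
  assert (HF : C F) by exact (symcl_controlled HE).
  destruct (maximal_independent F (nonisolated F)) as [M [MN [Mind Mmax]]].
  assert (MM : meshy C M).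
  { exists F. split; [exact HF|]. intros x Hall.
    destruct (classic (M x)) as [Mx|nMx].
    - destruct (MN x Mx) as [y [yx Fyx]]. apply yx. apply Mind; auto.
      apply Hall. exact (symcl_sym Fyx).
    - apply nMx. apply Hall. left; reflexivity. }
  apply (bounded_sub (bounded_ballS (Hmb M MM) HF)).
  intros x [a [ax Eax]].
  destruct (classic (M x)) as [Mx|nMx]; [exists x; split; [exact Mx | left; reflexivity]|].
  assert (Nx : nonisolated F x) by (exists a; split; [exact ax | right; left; exact Eax]).
  destruct (Mmax x Nx nMx) as [u [Mu [Fux|Fxu]]]; exists u; split; auto.
  exact (symcl_sym Fxu).
Qed.

Lemma expCP (R : rel (X -> Prop)) :
  expC C R <-> exists E, C E /\ forall A B, R A B -> expRel E A B.
Proof.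
  split.
  - intros H.
    apply (H (fun R => exists E, C E /\ forall A B, R A B -> expRel E A B)).
    + constructor.
      * exists (fun x y => x = y). split; [exact (co_diag HC)|].
        intros A B ->. apply expRel_refl. reflexivity.
      * intros E F [G [HG K]] FE. exists G; auto.
      * intros E F [G1 [H1 K1]] [G2 [H2 K2]].
        exists (fun x y => G1 x y \/ G2 x y). split; [exact (co_union HC _ _ H1 H2)|].
        intros A B [h|h].
        -- exact (expRel_mono (fun x y e => or_introl e) (K1 _ _ h)).
        -- exact (expRel_mono (fun x y e => or_intror e) (K2 _ _ h)).
      * intros E [G [HG K]]. exists G. split; [exact HG|].
        intros A B h. exact (expRel_sym (K _ _ h)).
      * intros E F [G1 [H1 K1]] [G2 [H2 K2]].
        exists (fun x z => (exists y, G2 x y /\ G1 y z) \/ (exists y, G1 x y /\ G2 y z)).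
        split; [exact (co_union HC _ _ (co_comp HC _ _ H2 H1) (co_comp HC _ _ H1 H2))|].
        intros A D [B [h1 h2]]. exact (expRel_comp (K1 _ _ h1) (K2 _ _ h2)).
    + intros E [E0 [HE0 ->]]. exists E0; auto.
  - intros [E [HE K]] C' HC' Hgen.
    apply (co_sub HC' (expRel E)); [apply Hgen; eauto | exact K].
Qed.

Lemma exp_connectedP (P : (X -> Prop) -> Prop) :
  coarse_connected (restrictC (expC C) P) <->
  forall A B, P A -> P B -> exists E, C E /\ expRel E A B.
Proof.
  split.
  - intros H A B PA PB.
    destruct (proj1 (expCP _) (H (exist _ A PA) (exist _ B PB))) as [E [HE K]].
    exists E. split; [exact HE|]. apply K. exists PA, PB. auto.
  - intros H [A PA] [B PB]. apply expCP.
    destruct (H A B PA PB) as [E [HE K]]. exists E. split; [exact HE|].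
    intros A' B' [pa [pb [e1 e2]]].
    injection e1 as ->. injection e2 as ->. exact K.
Qed.

Section Connected.

Hypothesis Hconn : coarse_connected C.

Lemma bounded_rect (A B : X -> Prop) (a b : X) :
  bounded C A -> bounded C B -> A a -> B b -> C (fun x y => A x /\ B y).
Proof.
  intros HA HB Aa Bb.
  apply (co_sub HC (fun x z => exists y, (A x /\ A y) /\
            exists w, (y = a /\ w = b) /\ (B w /\ B z))).
  - apply (co_comp HC); [exact HA|]. exact (co_comp HC _ _ (Hconn a b) HB).
  - intros x y [Ax By]. exists a. split; [auto|]. exists b. auto.
Qed.

Lemma thin_meshy_exp_close (A B : X -> Prop) :
  thin C -> nonempty_meshy C A -> nonempty_meshy C B -> exists E, C E /\ expRel E A B.
Proof.
  intros Ht [[a Aa] MA] [[b Bb] MB].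
  pose proof (thin_meshy_bounded Ht MA) as HA.
  pose proof (thin_meshy_bounded Ht MB) as HB.
  exists (fun x y => (B x /\ A y) \/ (A x /\ B y)). split.
  - apply (co_union HC); eapply bounded_rect; eassumption.
  - split; [intros a' Aa'; exists b | intros b' Bb'; exists a]; auto.
Qed.

Lemma singleton_meshy (x0 x1 : X) : x0 <> x1 -> meshy C (fun x => x = x0).
Proof.
  intros x01. exists (fun x y => x = y \/ (x = x0 /\ y = x1)). split.
  - exact (co_union HC _ _ (co_diag HC) (Hconn x0 x1)).
  - intros x Hall. destruct (classic (x = x0)) as [->|nx].
    + apply x01. symmetry. apply Hall. right; auto.
    + apply nx, Hall. left; reflexivity.
Qed.

(* A non-empty meshy set is exp-close to a singleton, hence lies in a ball around it. *)
Lemma exp_connected_meshy_bounded (A : X -> Prop) :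
  unbounded C -> coarse_connected (restrictC (expC C) (nonempty_meshy C)) ->
  meshy C A -> bounded C A.
Proof.
  intros Hunb Hexp MA.
  destruct (unbounded_two_points Hunb) as [x0 [x1 x01]].
  assert (B0 : bounded C (fun x => x = x0)) by exact (Hconn x0 x0).
  destruct (classic (exists a, A a)) as [NA|EA].
  - destruct (proj1 (exp_connectedP _) Hexp A (fun x => x = x0) (conj NA MA)
                (conj (ex_intro _ x0 eq_refl) (singleton_meshy x01))) as [E [HE [p _]]].
    exact (bounded_sub (bounded_ballS B0 HE) p).
  - apply (bounded_sub B0). intros a Aa. exfalso; eauto.
Qed.

End Connected.

Lemma cX_inj (x y : X) : cX x = cX y -> x = y.
Proof.
  intros H. apply NNPP; intro n.
  assert (h : cX x y) by exact (fun e => n (eq_sym e)).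
  rewrite H in h. exact (h eq_refl).
Qed.

Lemma expRel_cX (E : rel X) (x y : X) :
  expRel E (cX x) (cX y) -> x = y \/ (nonisolated E x /\ nonisolated E y).
Proof.
  intros [p q]. destruct (classic (x = y)) as [xy|xy]; [left; exact xy|right].
  split; [apply q | apply p]; intro e; auto.
Qed.

Lemma nonisolated_expRel_cX (E : rel X) (x y : X) :
  nonisolated E x -> nonisolated E y -> expRel (fun a b => a = b \/ E a b) (cX x) (cX y).
Proof.
  intros [u [ux Eux]] [v [vy Evy]]. split.
  - intros a ax. destruct (classic (a = y)) as [->|ay]; [exists v; auto | exists a; auto].
  - intros b by'. destruct (classic (b = x)) as [->|bx]; [exists u; auto | exists b; auto].
Qed.

Lemma cX_bornologous : bornologous C (expC C) (@cX X).
Proof.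
  intros E HE. apply expCP.
  exists (fun a b => a = b \/ symcl E a b). split.
  { exact (co_union HC _ _ (co_diag HC) (symcl_controlled HE)). }
  intros U V [x [y [Exy [-> ->]]]].
  destruct (classic (x = y)) as [<-|xy]; [apply expRel_refl; left; reflexivity|].
  apply nonisolated_expRel_cX.
  - exists y. split; [exact (fun e => xy (eq_sym e)) | right; right; exact Exy].
  - exists x. split; [exact xy | right; left; exact Exy].
Qed.

Lemma thin_cX_embedding : thin C -> asymorphic_embedding C (expC C) (@cX X).
Proof.
  intros Ht. split; [exact cX_inj|]. split; [exact cX_bornologous|].
  intros R HR _. destruct (proj1 (expCP R) HR) as [E [HE K]].
  apply (co_sub HC _ _ (co_union HC _ _ (co_diag HC) (proj1 thin_nonisolated Ht E HE))).
  intros x y Rxy. exact (expRel_cX (K _ _ Rxy)).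
Qed.

Lemma cX_embedding_thin : asymorphic_embedding C (expC C) (@cX X) -> thin C.
Proof.
  intros [_ [_ Hinv]]. apply thin_nonisolated. intros E HE.
  set (R := fun U V => exists x y, U = cX x /\ V = cX y /\ nonisolated E x /\ nonisolated E y).
  assert (HR : expC C R).
  { apply expCP. exists (fun a b => a = b \/ E a b).
    split; [exact (co_union HC _ _ (co_diag HC) HE)|].
    intros U V [x [y [-> [-> [Nx Ny]]]]]. exact (nonisolated_expRel_cX Nx Ny). }
  assert (Rimg : forall U V, R U V -> (exists x, U = cX x) /\ (exists y, V = cX y)).
  { intros U V [x [y [eU [eV _]]]]. eauto. }
  apply (co_sub HC _ _ (Hinv R HR Rimg)).
  intros x y [Nx Ny]. exists x, y. auto.
Qed.

End CoarseSpace.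

Theorem mainTheorem20 (X : Type) (C : rel X -> Prop)
  (HC : is_coarse C) (Hconn : coarse_connected C) (Hunb : unbounded C) :
  (thin C <-> coarse_connected (restrictC (expC C) (nonempty_meshy C))) /\
  (thin C <-> asymorphic_embedding C (expC C) (@cX X)).
Proof.
  split; split.
  - intros Ht. apply exp_connectedP; [exact HC|].
    intros A B MA MB. exact (thin_meshy_exp_close HC Hconn Ht MA MB).
  - intros Hexp. apply (meshy_bounded_thin HC).
    intros A MA. exact (exp_connected_meshy_bounded HC Hconn Hunb Hexp MA).
  - exact (thin_cX_embedding HC).
  - exact (cX_embedding_thin HC).
Qed.
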